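(* Let $k\ge 1$ and let $H$ be a connected $k$-regular $k$-edge-colorable graph with no loops or semi-edges (multiple ordinary edges allowed). Let $G$ be a connected simple $k$-regular graph and $u\in V(G)$ a vertex such that for every $x\in V(H)$ and every bijection $E_G(u)\to E_H(x)$ there is a covering projection from $G$ to $H$ mapping $u$ to $x$ and extending that bijection. Let $G_u$ be obtained from $G$ by splitting $u$ into $k$ pendant vertices: each edge $e\in E_G(u)$ is kept, but its end-vertex $u$ is replaced by a new vertex $u_e$ of degree 1. Then: (a) for every $x\in V(H)$ and every bijection $\sigma_x:E_G(u)\to E_H(x)$ there is a partial covering projection from $G_u$ onto $H$ that extends $\sigma_x$ and maps every $u_e$, $e\in E_G(u)$, to $x$; (b) in every partial covering projection from $G_u$ onto $H$, all the pendant vertices $u_e$, $e\in E_G(u)$, are mapped to the same vertex of $H$; (c) in every partial covering projection from $G_u$ onto $H$, the $k$ pendant edges are mapped to pairwise distinct edges of $H$ (incident with the common image of the pendant vertices).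
   Context: $E_G(u)$ denotes the set of edges of $G$ incident with $u$. A covering projection between graphs without loops and semi-edges is a map sending vertices to vertices and edges to edges, preserving incidences, such that for every edge $xy$ of the target its preimage is a perfect matching between the preimages of $x$ and $y$. A partial covering projection from $G'$ onto $H$ is a map $f:V(G')\cup E(G')\to V(H)\cup E(H)$ that is surjective on vertices and on edges, sends vertices to vertices and edges to edges, preserves incidences, and such that for every edge $xy$ of $H$ its preimage is a matching (not necessarily perfect) each of whose edges joins a vertex of $f^{-1}(x)$ to a vertex of $f^{-1}(y)$. *)

From mathcomp Require Import all_boot.
Set Implicit Arguments. Unset Strict Implicit. Unset Printing Implicit Defensive.

(* Finite multigraphs: every edge has two end-vertices end1 e, end2 e
   (unordered: the orientation carries no meaning).  Semi-edges are not
   representable; loops are excluded via [loopless]. *)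
Record mgraph := MGraph {
  V : finType;
  E : finType;
  end1 : E -> V;
  end2 : E -> V }.

Section Basic.
Variable g : mgraph.

Definition incident (e : E g) (v : V g) : bool := (end1 e == v) || (end2 e == v).

Definition Einc (v : V g) : {set E g} := [set e | incident e v].

Definition loopless : Prop := forall e : E g, end1 e != end2 e.

Definition simple_graph : Prop :=
  loopless /\
  forall e f : E g, [set end1 e; end2 e] = [set end1 f; end2 f] -> e = f.

Definition regular (k : nat) : Prop := forall v : V g, #|Einc v| = k.

Definition adj : rel (V g) := fun x y =>
  [exists e : E g, ((end1 e == x) && (end2 e == y)) || ((end1 e == y) && (end2 e == x))].

Definition connected : Prop := forall x y : V g, connect adj x y.

Definition edge_colorable (k : nat) : Prop :=
  exists c : E g -> 'I_k, forall e f : E g, e != f ->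
    (exists v, incident e v && incident f v) -> c e != c f.
End Basic.

Section Maps.
Variables (g h : mgraph) (fV : V g -> V h) (fE : E g -> E h).

Definition preserves_incidence : Prop :=
  forall e : E g,
    (fV (end1 e) = end1 (fE e) /\ fV (end2 e) = end2 (fE e)) \/
    (fV (end1 e) = end2 (fE e) /\ fV (end2 e) = end1 (fE e)).

(* covering projection: the preimage of every edge xy is a perfect matching
   between f^-1(x) and f^-1(y) *)
Definition covering_projection : Prop :=
  preserves_incidence /\
  forall (a : E h) (v : V g), (fV v == end1 a) || (fV v == end2 a) ->
    #|[set e in Einc v | fE e == a]| = 1.

Definition partial_covering_projection : Prop :=
  (forall y : V h, exists v, fV v = y) /\
  (forall a : E h, exists e, fE e = a) /\
  preserves_incidence /\
  forall (a : E h) (v : V g), #|[set e in Einc v | fE e == a]| <= 1.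
End Maps.

Definition bij_on (g h : mgraph) (u : V g) (x : V h) (sigma : E g -> E h) : Prop :=
  {in Einc u &, injective sigma} /\ sigma @: Einc u = Einc x.

Section Split.
Variables (g : mgraph) (u : V g).

Definition split_vertex : finType :=
  ({v : V g | v != u} + {e : E g | e \in Einc u})%type.

Lemma split_end1_inc (e : E g) : (end1 e != u) = false -> e \in Einc u.
Proof. by move/negbFE/eqP => <-; rewrite inE /incident eqxx. Qed.

Lemma split_end2_inc (e : E g) : (end2 e != u) = false -> e \in Einc u.
Proof. by move/negbFE/eqP => <-; rewrite inE /incident eqxx orbT. Qed.

Definition split_end1 (e : E g) : split_vertex :=
  (if end1 e != u as b return (end1 e != u) = b -> split_vertex
   then fun H => inl (exist _ (end1 e) H)
   else fun H => inr (exist _ e (split_end1_inc H))) erefl.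

Definition split_end2 (e : E g) : split_vertex :=
  (if end2 e != u as b return (end2 e != u) = b -> split_vertex
   then fun H => inl (exist _ (end2 e) H)
   else fun H => inr (exist _ e (split_end2_inc H))) erefl.

Definition split_graph : mgraph :=
  @MGraph split_vertex (E g) split_end1 split_end2.

Definition pendant (p : {e : E g | e \in Einc u}) : V split_graph := inr p.
End Split.

From mathcomp Require Import all_boot zify.
Set Implicit Arguments. Unset Strict Implicit. Unset Printing Implicit Defensive.

(* Fix a proper k-edge-colouring of H.  A vertex of degree k mapped locally
   injectively into H sees every colour exactly once, so counting the ends of
   colour-c edges inside a vertex set S shows that |S| and the number of
   colour-c edges leaving S have the same parity.  Since G covers H, |V G| is
   even; in G_u the |V G| - 1 kept vertices are then an odd number, so every
   colour occurs an odd number of times, hence exactly once, among the k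
   pendant edges: this gives (c).
   For (b), let N y count the kept vertices over y.  Counting the preimages of
   an edge from either end shows that N is constant along the edges that are not
   images of pendant edges, and grows by one from x to y along the image xy of a
   pendant edge whose pendant end lies over x.  Taking S = {y | N y < t}, the
   parity statement for the colour of a pendant edge p says that |S| is odd iff
   t = N x_p + 1; hence all N x_p equal some m, and by connectivity N only takes
   the values m and m + 1.  As sum_y N y = |V G| - 1 is one less than a multiple
   of |V H|, exactly one vertex has N y = m, and it is the image of every
   pendant vertex.  Part (a) restricts a covering G -> H that maps u to x. *)


Lemma sum_eqb (T : finType) (P : pred T) (a : T) :
  \sum_(v | P v) (a == v : nat) = P a.
Proof.
case: (boolP (P a)) => Pa.
  rewrite (bigD1 a) //= eqxx big1 // => v /andP[_ /negbTE].
  by rewrite eq_sym => ->.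
by rewrite big1 // => v Pv; case: eqP => // av; rewrite av Pv in Pa.
Qed.

Lemma card_set1_pred (T : finType) (a : T) (P : pred T) :
  #|[set x in [set a] | P x]| = P a.
Proof.
case: (boolP (P a)) => Pa.
  rewrite /= -(cards1 a); apply: eq_card => x; rewrite !inE.
  by case: eqP => // ->.
rewrite /= -(cards0 T); apply: eq_card => x; rewrite !inE.
by case: eqP => // ->; rewrite (negbTE Pa).
Qed.

Lemma sum_card_fibres (T U : finType) (f : T -> U) :
  \sum_(y : U) #|[set w | f w == y]| = #|T|.
Proof.
rewrite -sum1_card (partition_big f predT) //=.
by apply: eq_bigr => y _; rewrite -sum1dep_card.
Qed.

Lemma sum_gt0_eq_card1 (I : finType) (q : I -> nat) :
  (forall i, 0 < q i) -> \sum_i q i = #|I| -> forall i, q i = 1.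
Proof.
move=> q_gt0 sum_q i; have: \sum_j (q j - 1) == 0.
  rewrite sumnB => [|j _]; last exact: q_gt0.
  by rewrite sum_q sum1_card subnn.
by rewrite sum_nat_eq0 => /forallP /(_ i); have := q_gt0 i; lia.
Qed.

Lemma card_fibre_in_inj (T U : finType) (A : {set T}) (f : T -> U) (y : U) :
  {in A &, injective f} -> #|A| = #|U| -> #|[set x in A | f x == y]| = 1.
Proof.
move=> injf cardA; have: y \in f @: A.
  have /eqP -> : f @: A == setT.
    by rewrite eqEcard subsetT cardsT (card_in_imset injf) cardA /=.
  by rewrite in_setT.
case/imsetP => x Ax ->; apply/eqP/cards1P; exists x; apply/setP => z; rewrite !inE.
by apply/andP/eqP => [[Az /eqP /injf]|->]; [apply | rewrite Ax].
Qed.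

Section Handshake.
Variable g : mgraph.
Hypothesis lg : loopless g.

Lemma card_Einc_sum (v : V g) (F : pred (E g)) :
  #|[set e in Einc v | F e]| = \sum_(e | F e) ((end1 e == v) + (end2 e == v)).
Proof.
rewrite -sum1_card big_mkcond [RHS]big_mkcond /=; apply: eq_bigr => e _.
rewrite !inE /incident; case: (F e); rewrite ?andbF //=.
by case: eqP => [<-|_]; case: eqP => //= e12; have := lg e; rewrite e12 eqxx.
Qed.

Lemma sum_card_Einc (P : pred (V g)) (F : pred (E g)) :
  \sum_(v | P v) #|[set e in Einc v | F e]| = \sum_(e | F e) (P (end1 e) + P (end2 e)).
Proof.
under eq_bigr do rewrite card_Einc_sum.
by rewrite exchange_big; apply: eq_bigr => e _; rewrite big_split !sum_eqb.
Qed.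

Lemma odd_sum_card_Einc (P : pred (V g)) (F : pred (E g)) :
  odd (\sum_(v | P v) #|[set e in Einc v | F e]|) =
  odd #|[set e | F e & P (end1 e) != P (end2 e)]|.
Proof.
rewrite sum_card_Einc -sum1dep_card big_mkcondr /=.
by elim/big_rec2: _ => // e m n _; rewrite !oddD => ->; case: (P (end1 e)); case: (P (end2 e)).
Qed.

End Handshake.

Definition proper_edge_coloring (h : mgraph) (k : nat) (col : E h -> 'I_k) : Prop :=
  forall e f : E h, e != f -> (exists v, incident e v && incident f v) -> col e != col f.

Definition locally_injective (g h : mgraph) (fE : E g -> E h) : Prop :=
  forall (a : E h) (v : V g), #|[set e in Einc v | fE e == a]| <= 1.

Lemma id_preserves_incidence (h : mgraph) : preserves_incidence (@id (V h)) (@id (E h)).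
Proof. by move=> e; left. Qed.

Lemma id_locally_injective (h : mgraph) : locally_injective (@id (E h)).
Proof.
move=> a v; rewrite -(cards1 a).
by apply/subset_leq_card/subsetP => e; rewrite !inE => /andP [_ ->].
Qed.

Section LocallyInjective.
Variables (g h : mgraph) (fV : V g -> V h) (fE : E g -> E h).
Hypotheses (fVE : preserves_incidence fV fE) (fE_li : locally_injective fE).
Variables (k : nat) (col : E h -> 'I_k).
Hypothesis col_proper : proper_edge_coloring col.

Lemma incident_map e v : incident e v -> incident (fE e) (fV v).
Proof.
rewrite /incident => /orP[]/eqP<-;
  by case: (fVE e) => -[E1 E2]; rewrite ?E1 ?E2 eqxx ?orbT.
Qed.

Lemma sum_card_Einc_fibre a x : loopless g -> loopless h -> incident a x ->
  \sum_(v | fV v == x) #|[set e in Einc v | fE e == a]| = #|[set e | fE e == a]|.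
Proof.
move=> lg lh ax; rewrite sum_card_Einc // -sum1dep_card; apply: eq_bigr => e /eqP ea.
have := lh a; rewrite -ea; move: ax; rewrite -ea /incident.
by case: (fVE e) => -[-> ->] /orP[]/eqP-> /negbTE ne; rewrite eqxx ?ne // eq_sym ne.
Qed.

Lemma Einc_inj v : {in Einc v &, injective fE}.
Proof.
move=> e1 e2 e1v e2v e12; have /card_le1_eqP := fE_li (fE e1) v.
by apply; rewrite inE ?e1v ?e2v ?e12 /=.
Qed.

Lemma card_Einc_color v c :
  #|Einc v| = k -> #|[set e in Einc v | col (fE e) == c]| = 1.
Proof.
move=> degv; apply: card_fibre_in_inj; last by rewrite degv card_ord.
move=> e1 e2 e1v e2v; apply: contra_eq => ne12.
apply: col_proper; first by apply: contraNneq ne12 => /(Einc_inj e1v e2v) ->.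
by exists (fV v); move: e1v e2v; rewrite !inE => /incident_map -> /incident_map ->.
Qed.

Lemma card_Einc_edge v a :
  #|Einc v| = k -> incident a (fV v) -> #|[set e in Einc v | fE e == a]| = 1.
Proof.
move=> degv av; have /eqP/cards1P [e0 col_e0] := card_Einc_color (col a) degv.
have : e0 \in [set e0] by rewrite inE.
rewrite -col_e0 inE => /andP [e0v /eqP col_e0a].
apply/eqP; rewrite eqn_leq fE_li card_gt0; apply/set0Pn; exists e0.
rewrite inE e0v /=; move/eqP: col_e0a; apply: contraLR => e0a.
rewrite inE in e0v; apply: col_proper e0a _.
by exists (fV v); rewrite av incident_map.
Qed.

Lemma odd_card_color (P : pred (V g)) c : loopless g -> regular g k ->
  odd #|[set v | P v]| = odd #|[set e | col (fE e) == c & P (end1 e) != P (end2 e)]|.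
Proof.
move=> lg rg; rewrite -odd_sum_card_Einc // -sum1dep_card.
by congr odd; apply: eq_bigr => v _; rewrite card_Einc_color.
Qed.

Lemma regular_even_card : 0 < k -> loopless g -> regular g k -> ~~ odd #|V g|.
Proof.
move=> k_gt0 lg rg; rewrite -cardsT.
rewrite (@odd_card_color predT (Ordinal k_gt0)) // (_ : [set e | _ & _] = set0) ?cards0 //.
by apply/setP => e; rewrite !inE eqxx andbF.
Qed.

End LocallyInjective.

Section Coverings.
Variables (g h : mgraph) (fV : V g -> V h) (fE : E g -> E h).
Hypothesis cov : covering_projection fV fE.
Hypotheses (lg : loopless g) (lh : loopless h).

Lemma covering_locally_injective : locally_injective fE.
Proof.
move=> a v; case: (set_0Vmem [set e in Einc v | fE e == a]) => [->|[e]].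
  by rewrite cards0.
rewrite !inE => /andP [ev /eqP ea]; have := incident_map cov.1 ev.
by rewrite ea /incident => av; rewrite cov.2 // !(eq_sym (fV v)).
Qed.

Lemma card_fibre_edge a x : incident a x ->
  #|[set v | fV v == x]| = #|[set e | fE e == a]|.
Proof.
move=> ax; rewrite -(sum_card_Einc_fibre cov.1 lg lh ax) -sum1dep_card.
apply: eq_bigr => v /eqP vx; rewrite cov.2 // vx.
by move: ax; rewrite /incident !(eq_sym x) orbC.
Qed.

Hypothesis ch : connected h.

Lemma card_fibre_const x y : #|[set v | fV v == x]| = #|[set v | fV v == y]|.
Proof.
pose F z := #|[set v | fV v == z]|.
have F_ends a : F (end1 a) = F (end2 a).
  by rewrite /F !(card_fibre_edge (a := a)) // /incident eqxx ?orbT.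
have F_closed : closed (@adj h) [pred z | F z == F x].
  by move=> z z' /existsP [a /orP [] /andP [/eqP <- /eqP <-]]; rewrite !inE F_ends.
by have := closed_connect F_closed (ch x y); rewrite !inE eqxx => /esym/eqP.
Qed.

Lemma card_covering x : #|V g| = #|[set v | fV v == x]| * #|V h|.
Proof.
rewrite -(sum_card_fibres fV) mulnC -sum_nat_const.
by apply: eq_bigr => y _; apply: card_fibre_const.
Qed.

Lemma covering_surj (v0 : V g) y : exists v, fV v = y.
Proof.
have : 0 < #|[set v | fV v == y]|.
  by rewrite (card_fibre_const _ (fV v0)) card_gt0; apply/set0Pn; exists v0; rewrite inE.
by case/card_gt0P => v; rewrite inE => /eqP; exists v.
Qed.

Lemma covering_surj_edges (v0 : V g) a : exists e, fE e = a.
Proof.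
have [v va] := covering_surj v0 (end1 a).
have /cards1P [e Ee] : #|[set e in Einc v | fE e == a]| == 1.
  by rewrite cov.2 // va eqxx.
have : e \in [set e] by rewrite inE.
by rewrite -Ee inE => /andP [_ /eqP <-]; exists e.
Qed.

End Coverings.

Lemma exists_bij_on (g h : mgraph) (u : V g) (x : V h) :
  #|Einc u| = #|Einc x| -> 0 < #|Einc u| -> exists sigma, bij_on u x sigma.
Proof.
move=> deg_ux /card_gt0P [e0 e0u].
pose sigma e := enum_val (cast_ord deg_ux (enum_rank_in e0u e)).
have sigma_inj : {in Einc u &, injective sigma}.
  move=> e1 e2 e1u e2u /enum_val_inj /cast_ord_inj e12.
  by rewrite -(enum_rankK_in e0u e1u) -(enum_rankK_in e0u e2u) e12.
exists sigma; split => //; apply/eqP; rewrite eqEcard card_in_imset // deg_ux leqnn andbT.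
by apply/subsetP => _ /imsetP [e _ ->]; apply: enum_valP.
Qed.

Lemma dep_if_ind (b : bool) (A : Type) (P : A -> Prop)
    (t : b = true -> A) (f : b = false -> A) :
  (forall H, P (t H)) -> (forall H, P (f H)) ->
  P ((if b as b' return b = b' -> A then t else f) erefl).
Proof.
move=> Pt Pf; suff: forall b' (Hb : b = b'),
  P ((if b' as c return b = c -> A then t else f) Hb) by apply.
by case.
Qed.

Section SplitGraph.
Variables (G : mgraph) (u : V G).
Local Notation Gu := (split_graph u).
Local Notation kept := {v : V G | v != u}.
Local Notation pendants := {e : E G | e \in Einc u}.

Definition unsplit (s : V Gu) : V G := if s is inl w then val w else u.

Lemma unsplit_end1 e : unsplit (split_end1 u e) = end1 e.
Proof.
apply: (dep_if_ind (P := fun s => unsplit s = end1 e)) => // e1u.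
by apply/esym/eqP; rewrite -[_ == _]negbK e1u.
Qed.

Lemma unsplit_end2 e : unsplit (split_end2 u e) = end2 e.
Proof.
apply: (dep_if_ind (P := fun s => unsplit s = end2 e)) => // e2u.
by apply/esym/eqP; rewrite -[_ == _]negbK e2u.
Qed.

Lemma split_end1_inr e p : split_end1 u e = inr p -> val p = e.
Proof. by apply: (dep_if_ind (P := fun s => s = inr p -> val p = e)) => // ? [<-]. Qed.

Lemma split_end2_inr e p : split_end2 u e = inr p -> val p = e.
Proof. by apply: (dep_if_ind (P := fun s => s = inr p -> val p = e)) => // ? [<-]. Qed.

Lemma eq_inl_unsplit (s : V Gu) (w : kept) : (s == inl w) = (unsplit s == val w).
Proof.
case: s => [w'|p] /=; first by apply/eqP/eqP => [[->]|/val_inj ->].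
by rewrite [u == _]eq_sym (negbTE (valP w)).
Qed.

Lemma eq_inr_unsplit (s : V Gu) e p : (forall p', s = inr p' -> val p' = e) ->
  (s == inr p) = (unsplit s == u) && (e == val p).
Proof.
case: s => [w|p'] /= s_e; first by rewrite (negbTE (valP w)).
by rewrite -(s_e p') // eqxx; apply/eqP/eqP => [[->]|/val_inj ->].
Qed.

Lemma incident_inl e w : @incident Gu e (inl w) = @incident G e (val w).
Proof. by rewrite /incident /= !eq_inl_unsplit unsplit_end1 unsplit_end2. Qed.

Lemma incident_inr e p : @incident Gu e (inr p) = (e == val p).
Proof.
rewrite /incident /= (eq_inr_unsplit p (@split_end1_inr e)).
rewrite (eq_inr_unsplit p (@split_end2_inr e)).
rewrite unsplit_end1 unsplit_end2 -andb_orl andb_idl // => /eqP ->.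
by have := valP p; rewrite inE.
Qed.

Lemma Einc_inl w : @Einc Gu (inl w) = Einc (val w).
Proof. by apply/setP => e; rewrite !inE incident_inl. Qed.

Lemma Einc_inr p : @Einc Gu (inr p) = [set val p].
Proof. by apply/setP => e; rewrite !inE incident_inr. Qed.

Lemma split_loopless : loopless G -> loopless Gu.
Proof.
move=> lG e; apply: contra (lG e) => /eqP /= e12.
by rewrite -unsplit_end1 -unsplit_end2 e12.
Qed.

Lemma card_kept : #|{: kept}| = #|V G|.-1.
Proof. by rewrite card_sig -(cardC1 u); apply: eq_card => v; rewrite !inE. Qed.

Lemma card_pendants : #|{: pendants}| = #|Einc u|.
Proof. by rewrite card_sig; apply: eq_card => e; rewrite !inE. Qed.

Lemma split_partial_covering (H : mgraph) (gV : V G -> V H) (gE : E G -> E H) :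
  covering_projection gV gE -> loopless G -> loopless H -> connected H ->
  0 < #|Einc u| -> partial_covering_projection (gV \o unsplit) (gE : E Gu -> E H).
Proof.
move=> cov lG lH cH /card_gt0P [e0 e0u].
have unsplit_surj v : exists s, unsplit s = v.
  case: (eqVneq v u) => [->|vu]; first by exists (inr (exist _ e0 e0u)).
  by exists (inl (exist _ v vu)).
split; [|split; [|split]].
- move=> y; have [v <-] := covering_surj cov lG lH cH u y.
  by have [s <-] := unsplit_surj v; exists s.
- exact: covering_surj_edges cov lG lH cH u.
- by move=> e /=; rewrite unsplit_end1 unsplit_end2; apply: cov.1.
- move=> a [w|p]; first by rewrite Einc_inl; exact: covering_locally_injective cov a (val w).
  rewrite Einc_inr -(cards1 (val p)).
  by apply/subset_leq_card/subsetP => e; rewrite inE => /andP [].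
Qed.

End SplitGraph.

Section SplitPartialCovering.
Variables (k : nat) (H G : mgraph) (u : V G) (col : E H -> 'I_k).
Variables (fV : V (split_graph u) -> V H) (fE : E (split_graph u) -> E H).
Local Notation kept := {v : V G | v != u}.
Local Notation pendants := {e : E G | e \in Einc u}.
Hypotheses (lG : loopless G) (rG : regular G k).
Hypotheses (col_proper : proper_edge_coloring col) (pcov : partial_covering_projection fV fE).
Hypothesis evenG : ~~ odd #|V G|.

Let fVE : preserves_incidence fV fE := pcov.2.2.1.
Let fE_li : locally_injective fE := pcov.2.2.2.

Lemma degree_kept (w : kept) : #|@Einc (split_graph u) (inl w)| = k.
Proof. by rewrite Einc_inl rG. Qed.

Definition pendant_color (p : pendants) := col (fE (val p)).

Lemma odd_card_pendant_color c : odd #|[set p | pendant_color p == c]|.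
Proof.
have := odd_sum_card_Einc (split_loopless lG) predT (fun e => col (fE e) == c).
rewrite (_ : [set e | _ & _] = set0); last by apply/setP => e; rewrite !inE eqxx andbF.
rewrite cards0 big_sumType /=.
under eq_bigr do rewrite (card_Einc_color fVE fE_li col_proper c (degree_kept _)).
under [X in _ + X]eq_bigr do rewrite Einc_inr card_set1_pred.
rewrite sum1_card card_kept -sum1dep_card big_mkcond /=.
have : 0 < #|V G| by apply/card_gt0P; exists u.
move: evenG; case: #|V G| => // n /= /negPn odd_n _.
by rewrite oddD odd_n => /negbFE odd_sum; rewrite big_mkcond.
Qed.

Lemma card_pendant_color c : #|[set p | pendant_color p == c]| = 1.
Proof.
apply: (sum_gt0_eq_card1 (q := fun c => #|[set p | pendant_color p == c]|)) => [c'|].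
  by have := odd_card_pendant_color c'; case: #|_|.
by rewrite sum_card_fibres card_pendants rG card_ord.
Qed.

Lemma pendant_color_inj : injective pendant_color.
Proof.
move=> p1 p2 p12; have /card_le1_eqP := eq_leq (card_pendant_color (pendant_color p1)).
by apply; rewrite inE ?p12 eqxx.
Qed.

Lemma pendant_edges_inj : {in Einc u &, injective (fE : E G -> E H)}.
Proof.
move=> e1 e2 e1u e2u e12.
have := @pendant_color_inj (exist _ e1 e1u) (exist _ e2 e2u).
by rewrite /pendant_color /= e12 => /(_ erefl) [].
Qed.

Lemma pendant_incident (p : pendants) : incident (fE (val p)) (fV (pendant p)).
Proof. by apply: incident_map fVE _ _ _; rewrite incident_inr. Qed.

Hypotheses (lH : loopless H) (rH : regular H k).

Definition kept_over y := #|[set w : kept | fV (inl w) == y]|.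
Definition pendants_over a y :=
  #|[set p : pendants | (fV (pendant p) == y) && (fE (val p) == a)]|.

Lemma card_edge_preimage a y : incident a y ->
  #|[set e | fE e == a]| = kept_over y + pendants_over a y.
Proof.
move=> ay; rewrite -(sum_card_Einc_fibre fVE (split_loopless lG) lH ay) big_sumType /=.
congr (_ + _).
  rewrite /kept_over -sum1dep_card; apply: eq_bigr => w /eqP wy.
  by rewrite (card_Einc_edge fVE fE_li col_proper (degree_kept w)) // wy.
under eq_bigr do rewrite Einc_inr card_set1_pred.
by rewrite /pendants_over -sum1dep_card big_mkcondr.
Qed.

Section Pendant.
Variable p : pendants.

Let x := fV (pendant p).
Let a := fE (val p).
Definition pendant_far := if end1 a == x then end2 a else end1 a.

Lemma pendant_edge_ends :
  (end1 a, end2 a) = (x, pendant_far) \/ (end1 a, end2 a) = (pendant_far, x).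
Proof.
rewrite /pendant_far; have := pendant_incident p; rewrite /incident -/a -/x.
by case: eqP => [->|_] /= => [_|/eqP ->]; [left | right].
Qed.

Lemma pendants_over_self : pendants_over a x = 1.
Proof.
apply/eqP/cards1P; exists p; apply/setP => r; rewrite !inE.
apply/andP/eqP => [[_ /eqP ra]|->]; last by rewrite !eqxx.
exact/pendant_color_inj/(congr1 col).
Qed.

Lemma pendants_over_far : pendants_over a pendant_far = 0.
Proof.
apply/eqP; rewrite cards_eq0; apply/eqP/setP => r; rewrite !inE.
apply/andP => -[/eqP r_far /eqP ra]; have rp := pendant_color_inj (congr1 col ra).
rewrite rp -/x in r_far; have := lH a.
by case: pendant_edge_ends => -[-> ->]; rewrite r_far eqxx.
Qed.

Lemma kept_over_far : kept_over pendant_far = (kept_over x).+1.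
Proof.
have far_a : incident a pendant_far.
  by rewrite /incident; case: pendant_edge_ends => -[-> ->]; rewrite eqxx ?orbT.
have := card_edge_preimage (pendant_incident p).
by rewrite (card_edge_preimage far_a) pendants_over_self pendants_over_far addn0 addn1.
Qed.

End Pendant.

Lemma kept_over_ends a : (forall p : pendants, fE (val p) != a) ->
  kept_over (end1 a) = kept_over (end2 a).
Proof.
move=> not_pendant; have pend0 y : pendants_over a y = 0.
  apply/eqP; rewrite cards_eq0; apply/eqP/setP => p.
  by rewrite !inE (negbTE (not_pendant p)) andbF.
have a1 : incident a (end1 a) by rewrite /incident eqxx.
have a2 : incident a (end2 a) by rewrite /incident eqxx orbT.
by have := card_edge_preimage a1; rewrite (card_edge_preimage a2) !pend0 !addn0 => ->.
Qed.

Definition crosses t a := (kept_over (end1 a) < t) != (kept_over (end2 a) < t).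

Lemma crosses_pendant (p : pendants) t :
  crosses t (fE (val p)) = (t == (kept_over (fV (pendant p))).+1).
Proof.
rewrite /crosses; case: (pendant_edge_ends p) => -[-> ->]; rewrite kept_over_far;
  move: (kept_over _) => n; lia.
Qed.

Lemma crosses_pendant_edge t a : crosses t a -> exists p : pendants, fE (val p) = a.
Proof.
case: (pickP (fun p : pendants => fE (val p) == a)) => [p /eqP <-|none]; first by exists p.
by rewrite /crosses kept_over_ends ?eqxx // => p; rewrite none.
Qed.

(* The colour classes of H are perfect matchings, and the only edge of
   colour [pendant_color p] leaving [{y | kept_over y < t}] can be [fE (val p)]. *)
Lemma odd_card_kept_below (p : pendants) t :
  odd #|[set y | kept_over y < t]| = (t == (kept_over (fV (pendant p))).+1).
Proof.
rewrite (odd_card_color (@id_preserves_incidence H) (@id_locally_injective H) col_proper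
  (fun y => kept_over y < t) (pendant_color p) lH rH).
rewrite (_ : [set e | _ & _] =
  [set e in [set fE (val p)] | t == (kept_over (fV (pendant p))).+1]) ?card_set1_pred ?oddb //.
apply/setP => e; rewrite !inE -/(crosses t e) -crosses_pendant.
apply/andP/andP => [[/eqP col_e cr]|[/eqP -> cr]]; last by rewrite eqxx.
have [r re] := crosses_pendant_edge cr.
have rp : r = p by apply: pendant_color_inj; rewrite /pendant_color re.
by rewrite -re rp eqxx -rp re.
Qed.

Lemma kept_over_pendants (p r : pendants) :
  kept_over (fV (pendant p)) = kept_over (fV (pendant r)).
Proof.
have := odd_card_kept_below p (kept_over (fV (pendant r))).+1.
by rewrite (odd_card_kept_below r) eqxx => /esym/eqP [].
Qed.

Hypothesis cH : connected H.

Lemma kept_over_bounds (p : pendants) y :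
  kept_over (fV (pendant p)) <= kept_over y <= (kept_over (fV (pendant p))).+1.
Proof.
set m := kept_over _; have crosses_m t a : crosses t a -> t = m.+1.
  move=> cr; have [r re] := crosses_pendant_edge cr.
  by move: cr; rewrite -re crosses_pendant (kept_over_pendants r p) => /eqP.
have below_closed t : t != m.+1 -> closed (@adj H) [pred z | kept_over z < t].
  move=> tm z z' /existsP [a az]; have : ~~ crosses t a.
    by apply: contra tm => /crosses_m ->.
  rewrite /crosses negbK => /eqP ea.
  by case/orP: az => /andP [/eqP <- /eqP <-]; rewrite !inE ea.
have := closed_connect (below_closed m _) (cH (fV (pendant p)) y).
have := closed_connect (below_closed m.+2 _) (cH (fV (pendant p)) y).
rewrite !inE -/m ltnn ltnS leqnSn ltnS => up low.
by rewrite leqNgt -low ?up //; apply/eqP; lia.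
Qed.

Lemma card_eq1_mul (n h m a : nat) :
  0 < n * h -> 0 < a -> a <= h -> (n * h).-1 + a = m.+1 * h -> a = 1.
Proof.
move=> nh_gt0 a_gt0 ah; case: (leqP m.+1 n) => mn.
  by have := leq_mul mn (leqnn h); lia.
by have := leq_mul mn (leqnn h); rewrite mulSn; lia.
Qed.

Lemma pendants_same_image n (cardG : #|V G| = n * #|V H|) (p r : pendants) :
  fV (pendant p) = fV (pendant r).
Proof.
set m := kept_over (fV (pendant p)).
have sum_kept : \sum_y kept_over y = #|V G|.-1.
  by rewrite /kept_over (sum_card_fibres (fun w => fV (inl w))) card_kept.
have : \sum_y (kept_over y + (kept_over y == m)) = \sum_(y : V H) m.+1.
  apply: eq_bigr => y _; have := kept_over_bounds p y; rewrite -/m.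
  by case: eqP => [->|]; lia.
rewrite big_split /= sum_kept sum_nat_const.
set A := [set y | kept_over y == m].
have -> : \sum_y (kept_over y == m : nat) = #|A|.
  by rewrite -sum1dep_card [RHS]big_mkcond.
move=> sumA.
have p_in_A q : fV (pendant q) \in A by rewrite inE -(kept_over_pendants p q).
have /eq_leq /card_le1_eqP : #|A| = 1.
  apply: (@card_eq1_mul n #|V H| m).
  - by rewrite -cardG; apply/card_gt0P; exists u.
  - by apply/card_gt0P; exists (fV (pendant p)).
  - exact: max_card.
  - by rewrite -cardG sumA mulnC.
by apply; apply: p_in_A.
Qed.

End SplitPartialCovering.

Theorem mainTheorem6 (k : nat) (H G : mgraph) (u : V G) :
  1 <= k ->
  loopless H -> connected H -> regular H k -> edge_colorable H k ->
  simple_graph G -> connected G -> regular G k ->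
  (forall (x : V H) (sigma : E G -> E H), bij_on u x sigma ->
     exists (fV : V G -> V H) (fE : E G -> E H),
       covering_projection fV fE /\ fV u = x /\
       {in Einc u, forall e, fE e = sigma e}) ->
  (* (a) *)
  (forall (x : V H) (sigma : E G -> E H), bij_on u x sigma ->
     exists (fV : V (split_graph u) -> V H) (fE : E (split_graph u) -> E H),
       partial_covering_projection fV fE /\
       (forall e : E G, e \in Einc u -> fE e = sigma e) /\
       (forall p : {e : E G | e \in Einc u}, fV (pendant p) = x)) /\
  (* (b) *)
  (forall (fV : V (split_graph u) -> V H) (fE : E (split_graph u) -> E H),
     partial_covering_projection fV fE ->
     forall p q : {e : E G | e \in Einc u}, fV (pendant p) = fV (pendant q)) /\
  (* (c) *)
  (forall (fV : V (split_graph u) -> V H) (fE : E (split_graph u) -> E H),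
     partial_covering_projection fV fE ->
     {in Einc u &, injective (fE : E G -> E H)} /\
     (forall p : {e : E G | e \in Einc u}, incident (fE (sval p)) (fV (pendant p)))).
Proof.
move=> k_gt0 lH cH rH [col col_proper] [lG _] _ rG lifts.
have {}col_proper : proper_edge_coloring col := col_proper.
have deg_u : 0 < #|Einc u| by rewrite rG.
have covering_onto (x : V H) :
    exists (gV : V G -> V H) (gE : E G -> E H), covering_projection gV gE.
  have [sigma sigma_bij] := exists_bij_on (etrans (rG u) (esym (rH x))) deg_u.
  by have [gV [gE [cov _]]] := lifts x sigma sigma_bij; exists gV, gE.
have evenG (x : V H) : ~~ odd #|V G|.
  have [gV [gE cov]] := covering_onto x.
  exact: (regular_even_card cov.1 (covering_locally_injective cov) col_proper).
split; [|split].
- move=> x sigma sigma_bij; have [gV [gE [cov [gu gsigma]]]] := lifts x sigma sigma_bij.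
  exists (gV \o unsplit (u:=u)), gE; split; first exact: split_partial_covering.
  by split=> [|p]; [exact: gsigma | rewrite /= gu].
- move=> fV fE pcov p q; have [gV [gE cov]] := covering_onto (fV (pendant p)).
  have := pendants_same_image lG rG col_proper pcov (evenG (fV (pendant p))) lH rH cH.
  by apply; apply: card_covering cov lG lH cH (fV (pendant p)).
- move=> fV fE pcov; split; last exact: pendant_incident.
  move=> e1 e2 e1u; have := evenG (fV (pendant (exist _ e1 e1u))).
  by move/(pendant_edges_inj lG rG col_proper pcov); apply.
Qed.
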